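(* Let $\mathbf z_1,\dots,\mathbf z_d\in\mathbb Z^d$ be a basis of $\mathbb Z^d$ with $|\underline{\mathbf z_1}|\leq|\underline{\mathbf z_2}|\leq|\underline{\mathbf z_3}|$. Then for each $\boldsymbol\alpha\in\mathfrak S_2$ we have $\langle\boldsymbol\alpha,\mathbf z_1\rangle\cdot\langle\boldsymbol\alpha_2,\mathbf z_1\rangle>0$.
   Context: Let $d\geq3$. $|\cdot|$ is the Euclidean norm, $\langle\cdot,\cdot\rangle$ the standard inner product. For $\mathbf x=(x_1,\dots,x_d)\in\mathbb R^d$ write $\underline{\mathbf x}=(x_1,\dots,x_{d-1})$. Let $\pi_d=\{\mathbf x\in\mathbb R^d:x_d=1\}$. For given vectors $\mathbf z_1,\mathbf z_2,\dots$: $\det\underline\Lambda_{k,l}=|\underline{\mathbf z_k}\wedge\dots\wedge\underline{\mathbf z_{k+l-1}}|$; $R_k=1/(2|\underline{\mathbf z_{k+1}}|\det\underline\Lambda_{k,d-1})$; when $\underline{\mathbf z_k},\dots,\underline{\mathbf z_{k+d-2}}$ are linearly independent, $\boldsymbol\alpha_k$ is the unique point of $\pi_d$ orthogonal to $\mathbf z_k,\dots,\mathbf z_{k+d-2}$ and $\mathfrak S_k=\{\mathbf x\in\pi_d:|\mathbf x-\boldsymbol\alpha_k|\le R_k\}$; whenever $\boldsymbol\alpha_k$ or $\mathfrak S_k$ appears it is implicitly assumed well defined. *)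

(* Ambient dimension d = n.+1 (so d >= 3 iff 2 <= n). *)
From mathcomp Require Import all_boot all_order all_algebra.
From mathcomp Require Import reals.
Set Implicit Arguments. Unset Strict Implicit. Unset Printing Implicit Defensive.
Import Order.TTheory GRing.Theory Num.Theory.
Local Open Scope ring_scope.

Section Defs.
Variable R : realType.

Definition inner (m : nat) (x y : 'rV[R]_m) : R := (x *m y^T) 0 0.
Definition enorm (m : nat) (x : 'rV[R]_m) : R := Num.sqrt (inner x x).

(* underline: drop the last coordinate, R^(n+1) -> R^n *)
Definition ul (n : nat) (x : 'rV[R]_n.+1) : 'rV[R]_n :=
  \row_(j < n) x 0 (widen_ord (leqnSn n) j).

Definition wedge_norm (m l : nat) (u : 'I_l -> 'rV[R]_m) : R :=
  Num.sqrt (\det (\matrix_(i < l, j < l) inner (u i) (u j))).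

Definition zR (m : nat) (v : 'rV[int]_m) : 'rV[R]_m := map_mx (fun a : int => a%:~R) v.

(* the vectors are indexed z 1, ..., z d as in the paper (z : nat -> Z^d) *)
Definition detLam (n : nat) (z : nat -> 'rV[int]_n.+1) (k l : nat) : R :=
  wedge_norm (fun i : 'I_l => ul (zR (z (k + i)%N))).

Definition Rk (n : nat) (z : nat -> 'rV[int]_n.+1) (k : nat) : R :=
  1 / (2 * enorm (ul (zR (z k.+1))) * detLam z k n).

Definition ul_indep (n : nat) (z : nat -> 'rV[int]_n.+1) (k : nat) : Prop :=
  row_free (\matrix_(i < n) ul (zR (z (k + i)%N))).

Definition in_pi (n : nat) (x : 'rV[R]_n.+1) : Prop := x 0 ord_max = 1.

(* a is alpha_k : the (unique, under ul_indep) point of pi_d orthogonal to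
   z_k, ..., z_(k+d-2) *)
Definition is_alpha (n : nat) (z : nat -> 'rV[int]_n.+1) (k : nat) (a : 'rV[R]_n.+1) : Prop :=
  in_pi a /\ forall i : 'I_n, inner a (zR (z (k + i)%N)) = 0.

Definition in_S (n : nat) (z : nat -> 'rV[int]_n.+1) (k : nat) (a x : 'rV[R]_n.+1) : Prop :=
  in_pi x /\ enorm (x - a) <= Rk z k.
End Defs.

Definition is_Zbasis (d : nat) (z : nat -> 'rV[int]_d) : Prop :=
  forall v : 'rV[int]_d, exists! c : 'rV[int]_d, v = \sum_(i < d) c 0 i *: z i.+1.

(** Let [M] be the integer matrix with rows [z_1, ..., z_d]; being a basis of
    [Z^d], it has determinant [±1].  Multiplying [M] on the right by the
    unitriangular matrix that replaces its last column by [alpha_2] kills every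
    entry of that column except [<alpha_2, z_1>], because [alpha_2] is orthogonal
    to [z_2, ..., z_d].  Expanding along that column gives
    [|<alpha_2, z_1>| * det Lambda_{2,d-1} = 1].  For [alpha] in [S_2] the vector
    [alpha - alpha_2] has last coordinate [0], so by Cauchy-Schwarz and
    [|ul z_1| <= |ul z_3|],
    [|<alpha - alpha_2, z_1>| <= R_2 |ul z_3| <= 1 / (2 det Lambda_{2,d-1})],
    which is half of [|<alpha_2, z_1>|]: the two inner products have the same
    sign. *)

From mathcomp Require Import all_boot all_order all_algebra.
From mathcomp Require Import reals.
From mathcomp Require Import ring lra.
Import Order.TTheory GRing.Theory Num.Theory.
Local Open Scope ring_scope.

Set Implicit Arguments. Unset Strict Implicit.

Lemma mul_gt0_near (R : realDomainType) (x y : R) :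
  `|y - x| < `|x| -> 0 < y * x.
Proof.
rewrite -(@ltr_pXn2r _ 2) ?nnegrE ?normr_ge0 // !real_normK ?num_real //.
nra.
Qed.

Lemma sum_mul_sqr_le (R : realFieldType) m (f g : 'I_m -> R) :
  (\sum_k f k * g k) ^+ 2 <= (\sum_k f k ^+ 2) * (\sum_k g k ^+ 2).
Proof.
set s := \sum_k f k ^+ 2; set b := \sum_k f k * g k; set a := \sum_k g k ^+ 2.
have a_ge0 : 0 <= a by apply: sumr_ge0 => k _; rewrite sqr_ge0.
have discr : 0 <= a * (a * s - b ^+ 2).
  have -> : a * (a * s - b ^+ 2) = \sum_k (a * f k - b * g k) ^+ 2.
    rewrite (eq_bigr (fun k => a ^+ 2 * f k ^+ 2 - 2 * a * b * (f k * g k)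
                               + b ^+ 2 * g k ^+ 2)) => [|k _]; last first.
      by rewrite sqrrB; ring.
    by rewrite !big_split /= sumrN -!mulr_sumr -/a -/b -/s; ring.
  by apply: sumr_ge0 => k _; rewrite sqr_ge0.
have [a_gt0 | a_eq0] := boolP (0 < a).
  by rewrite mulrC -subr_ge0 -(pmulr_rge0 _ a_gt0).
have {a_ge0} /eqP a0 : a == 0 by rewrite eq_le a_ge0 andbT leNgt.
have g0 k : g k = 0.
  by apply/eqP; rewrite -sqrf_eq0 (psumr_eq0P _ a0) // => i _; rewrite sqr_ge0.
suff -> : b = 0 by rewrite expr0n mulr_ge0 // sumr_ge0 // => k _; rewrite sqr_ge0.
by rewrite /b big1 // => k _; rewrite g0 mulr0.
Qed.

Section InnerProduct.
Variable R : realType.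

Lemma inner_sum m (x y : 'rV[R]_m) : inner x y = \sum_k x 0 k * y 0 k.
Proof. by rewrite /inner mxE; apply: eq_bigr => k _; rewrite mxE. Qed.

Lemma innerBl m (x y u : 'rV[R]_m) : inner (x - y) u = inner x u - inner y u.
Proof. by rewrite /inner mulmxBl !mxE. Qed.

Lemma inner_ul n (x y : 'rV[R]_n.+1) :
  inner x y = inner (ul x) (ul y) + x 0 ord_max * y 0 ord_max.
Proof.
rewrite !inner_sum big_ord_recr /=; congr (_ + _).
by apply: eq_bigr => k _; rewrite !mxE.
Qed.

Lemma inner_self_ge0 m (x : 'rV[R]_m) : 0 <= inner x x.
Proof. by rewrite inner_sum; apply: sumr_ge0 => k _; rewrite -expr2 sqr_ge0. Qed.

Lemma enorm_ge0 m (x : 'rV[R]_m) : 0 <= enorm x.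
Proof. exact: sqrtr_ge0. Qed.

Lemma normr_inner_le m (x y : 'rV[R]_m) : `|inner x y| <= enorm x * enorm y.
Proof.
rewrite /enorm -sqrtrM ?inner_self_ge0 // -sqrtr_sqr.
by rewrite ler_sqrt ?mulr_ge0 ?inner_self_ge0 // !inner_sum sum_mul_sqr_le.
Qed.

Lemma normr_inner_le_ul n (x y : 'rV[R]_n.+1) : x 0 ord_max = 0 ->
  `|inner x y| <= enorm x * enorm (ul y).
Proof.
move=> x_last; have enorm_x : enorm x = enorm (ul x).
  by rewrite /enorm inner_ul x_last mulr0 addr0.
by rewrite enorm_x inner_ul x_last mul0r addr0 normr_inner_le.
Qed.

End InnerProduct.

Section Determinants.
Variable R : realType.

Lemma wedge_norm_det n (u : 'I_n -> 'rV[R]_n) :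
  wedge_norm u = `|\det (\matrix_i u i)|.
Proof.
rewrite /wedge_norm -sqrtr_sqr expr2 -[X in _ * X]det_tr -det_mulmx.
congr (Num.sqrt (\det _)); apply/matrixP => i j.
by rewrite !mxE inner_sum; apply: eq_bigr => k _; rewrite !mxE.
Qed.

Lemma det_unitriangular_last_col n (a : 'rV[R]_n.+1) : a 0 ord_max = 1 ->
  \det (\matrix_(i, j) if j == ord_max then a 0 i else (i == j)%:R) = 1.
Proof.
move=> a_last; rewrite -det_tr det_trig; last first.
  apply/is_trig_mxP => i j lt_ij; rewrite !mxE.
  have /negPf -> : i != ord_max.
    by apply: contraTneq lt_ij => ->; rewrite -leqNgt leq_ord.
  by rewrite -val_eqE (gtn_eqF lt_ij).
rewrite (bigD1 ord_max) //= big1 ?mulr1 => [|i /negPf i_max]; rewrite !mxE.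
  by rewrite eqxx.
by rewrite i_max eqxx.
Qed.

Lemma det_orthogonal_rows n (M : 'M[R]_n.+1) (a : 'rV[R]_n.+1) :
  a 0 ord_max = 1 -> (forall i : 'I_n, inner a (row (lift ord0 i) M) = 0) ->
  \det M = inner a (row 0 M) * cofactor M 0 ord_max.
Proof.
move=> a_last a_orth.
pose E : 'M[R]_n.+1 :=
  \matrix_(i, j) if j == ord_max then a 0 i else (i == j)%:R.
have ME_last i : (M *m E) i ord_max = inner a (row i M).
  by rewrite inner_sum !mxE; apply: eq_bigr => k _; rewrite !mxE eqxx mulrC.
have ME_col i j : j != ord_max -> (M *m E) i j = M i j.
  move=> /negPf j_max; rewrite !mxE (bigD1 j) //= big1 ?addr0.
    by rewrite !mxE j_max eqxx mulr1.
  by move=> k /negPf k_j; rewrite !mxE j_max k_j mulr0.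
rewrite -[LHS]mulr1 -(det_unitriangular_last_col a_last) -det_mulmx.
rewrite (expand_det_col _ ord_max) big_ord_recl big1 ?addr0 => [|i _]; last first.
  by rewrite ME_last a_orth mul0r.
rewrite ME_last; congr (_ * _); rewrite /cofactor; congr (_ * \det _).
congr row'; apply/matrixP => i j.
by rewrite mxE [RHS]mxE ME_col // eq_sym neq_lift.
Qed.

Lemma Zbasis_det_unit n (z : nat -> 'rV[int]_n) :
  is_Zbasis z -> \det (\matrix_(i < n) z i.+1) \is a GRing.unit.
Proof.
move=> zB; have coords j : exists c : 'rV[int]_n,
    delta_mx 0 j = \sum_(i < n) c 0 i *: z i.+1.
  by have [c [cE _]] := zB (delta_mx 0 j); exists c.
have [c cE] := fin_all_exists coords.
have /mulmx1_unit[_] : (\matrix_j c j) *m (\matrix_(i < n) z i.+1) = 1%:M.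
  apply/matrixP => j k; rewrite !mxE.
  move/(congr1 (fun v : 'rV[int]_n => v 0 k)): (cE j).
  rewrite mxE eqxx eq_sym /= => ->; rewrite summxE.
  by apply: eq_bigr => i _; rewrite !mxE.
by rewrite unitmxE.
Qed.

Lemma normr_det_Zbasis n (z : nat -> 'rV[int]_n) :
  is_Zbasis z -> `|\det (\matrix_(i < n) zR R (z i.+1))| = 1.
Proof.
move=> /Zbasis_det_unit; have -> : \matrix_(i < n) zR R (z i.+1) =
    map_mx intr (\matrix_(i < n) z i.+1) by apply/matrixP => i j; rewrite !mxE.
by rewrite det_map_mx -intr_norm => /orP[] /eqP ->; rewrite ?normrN normr1.
Qed.

Lemma inner_alpha_detLam n (z : nat -> 'rV[int]_n.+1) (a : 'rV[R]_n.+1) :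
  is_Zbasis z -> is_alpha z 2 a -> `|inner a (zR R (z 1%N))| * detLam R z 2 n = 1.
Proof.
move=> zB [a_pi a_orth]; rewrite -(normr_det_Zbasis zB).
rewrite (det_orthogonal_rows a_pi) => [|i]; last by rewrite rowK a_orth.
rewrite rowK /cofactor normrM normrM normrX normrN1 expr1n mul1r.
rewrite /detLam wedge_norm_det; congr (_ * `|\det _|).
apply/matrixP => i j; rewrite !mxE.
have -> : lift ord_max j = widen_ord (leqnSn n) j.
  by apply: val_inj; rewrite /= /bump leqNgt ltn_ord.
by rewrite add2n.
Qed.

End Determinants.

Lemma Rk_mul_enorm_le (R : realType) n (z : nat -> 'rV[int]_n.+1) k :
  Rk R z k * enorm (ul (zR R (z k.+1))) <= 1 / (2 * detLam R z k n).
Proof.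
have D_ge0 : 0 <= detLam R z k n by apply: sqrtr_ge0.
have [e0 | e_neq0] := eqVneq (enorm (ul (zR R (z k.+1)))) 0.
  by rewrite e0 mulr0 divr_ge0 ?mulr_ge0.
by rewrite /Rk !mul1r !invfM mulrAC divfK.
Qed.

Theorem corollary1 (R : realType) (n : nat) (hn : (2 <= n)%N)
  (z : nat -> 'rV[int]_n.+1) :
  is_Zbasis z ->
  enorm (ul (zR R (z 1%N))) <= enorm (ul (zR R (z 2%N))) ->
  enorm (ul (zR R (z 2%N))) <= enorm (ul (zR R (z 3%N))) ->
  ul_indep R z 2 ->
  forall alpha2 : 'rV[R]_n.+1, is_alpha z 2 alpha2 ->
  forall alpha : 'rV[R]_n.+1, in_S z 2 alpha2 alpha ->
  inner alpha (zR R (z 1%N)) * inner alpha2 (zR R (z 1%N)) > 0.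
Proof.
move=> zB le12 le23 _ a2 a2_alpha a [a_pi a_near].
set c := inner a2 (zR R (z 1%N)); set D := detLam R z 2 n.
have cD : `|c| * D = 1 by apply: inner_alpha_detLam.
have c_gt0 : 0 < `|c|.
  rewrite normr_gt0; apply/eqP => c0.
  by move: cD; rewrite c0 normr0 mul0r => /esym/eqP; rewrite oner_eq0.
apply: mul_gt0_near; rewrite -innerBl.
have diff_last : (a - a2) 0 ord_max = 0 by rewrite !mxE a_pi a2_alpha.1 subrr.
apply: (le_lt_trans (normr_inner_le_ul _ diff_last)).
apply: (le_lt_trans (y := Rk R z 2 * enorm (ul (zR R (z 3%N))))).
  by apply: ler_pM; rewrite ?enorm_ge0 ?(le_trans le12 le23).
apply: (le_lt_trans (Rk_mul_enorm_le R z 2)); rewrite -/D.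
have -> : D = `|c|^-1.
  by apply: (mulfI (lt0r_neq0 c_gt0)); rewrite cD divff ?lt0r_neq0.
rewrite mul1r invfM invrK; lra.
Qed.
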